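(* Let $\Omega\subset\mathbb{R}^n$ be a convex body and fix an incentre $c$ of $\Omega$. For any $\varepsilon\in[0,\mathrm{In}(\Omega)]$, $$L_\varepsilon(\Omega)\subset \Omega\setminus \mathrm{Int}\Big[\Big(1-\frac{\varepsilon}{\mathrm{In}(\Omega)}\Big)\cdot\Omega\Big],$$ where for $\lambda\ge 0$, $\lambda\cdot\Omega=\{c+\lambda(x-c): x\in\Omega\}$ denotes the enlargement of $\Omega$ with scale factor $\lambda$ about $c$.
   Context: A convex body is a convex, closed subset of $\mathbb{R}^n$ with non-empty interior. $\mathrm{In}(\Omega)$ is the inradius of $\Omega$: the largest distance from $\partial\Omega$ of a point of $\Omega$ (equivalently the radius of the largest ball contained in $\Omega$). An incentre is a point of $\Omega$ at maximal distance $\mathrm{In}(\Omega)$ from $\partial\Omega$. The $\varepsilon$-inner neighbourhood is $L_\varepsilon(\Omega)=\{x\in\Omega:\|x-y\|\le\varepsilon\text{ for some }y\in\partial\Omega\}$. $\mathrm{Int}$ denotes interior. *)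

(* R^n is modelled as 'rV[R]_n over R : realType,
   with its (product = Euclidean) topology from MathComp-Analysis and the
   Euclidean norm defined explicitly below. *)
From HB Require Import structures.
From mathcomp Require Import all_boot all_order all_algebra.
From mathcomp Require Import all_classical all_reals all_analysis.
Set Implicit Arguments. Unset Strict Implicit. Unset Printing Implicit Defensive.
Import Order.TTheory GRing.Theory Num.Theory.
Import numFieldNormedType.Exports.
Local Open Scope classical_set_scope.
Local Open Scope ring_scope.

Definition enorm {R : realType} {n : nat} (x : 'rV[R]_n) : R :=
  Num.sqrt (\sum_(i < n) x ord0 i ^+ 2).

Definition convex_set {R : realType} {n : nat} (A : set 'rV[R]_n) : Prop :=
  forall x y (t : R), A x -> A y -> 0 <= t -> t <= 1 ->
    A (t *: x + (1 - t) *: y).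

Definition convex_body {R : realType} {n : nat} (A : set 'rV[R]_n) : Prop :=
  [/\ convex_set A, closed A & interior A !=set0].

Definition bd {R : realType} {n : nat} (A : set 'rV[R]_n) : set 'rV[R]_n :=
  closure A `\` interior A.

Definition dist_bd {R : realType} {n : nat} (A : set 'rV[R]_n) (x : 'rV[R]_n) : R :=
  inf [set enorm (x - y) | y in bd A].

Definition inradius {R : realType} {n : nat} (A : set 'rV[R]_n) : R :=
  sup [set dist_bd A x | x in A].

Definition is_incentre {R : realType} {n : nat} (A : set 'rV[R]_n) (c : 'rV[R]_n) : Prop :=
  A c /\ forall x, A x -> dist_bd A x <= dist_bd A c.

Definition inner_nbhd {R : realType} {n : nat} (A : set 'rV[R]_n) (eps : R) : set 'rV[R]_n :=
  [set x | A x /\ exists y, bd A y /\ enorm (x - y) <= eps].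

Definition scale_about {R : realType} {n : nat} (c : 'rV[R]_n) (lam : R) (A : set 'rV[R]_n) : set 'rV[R]_n :=
  [set c + lam *: (x - c) | x in A].

From Pilot Require Import Defs.
From HB Require Import structures.
From mathcomp Require Import all_boot all_order all_algebra.
From mathcomp Require Import all_classical all_reals all_analysis.
From mathcomp Require Import ring lra.

Set Implicit Arguments.
Unset Strict Implicit.
Unset Printing Implicit Defensive.

Import Order.TTheory GRing.Theory Num.Theory.
Import numFieldNormedType.Exports.
Local Open Scope classical_set_scope.
Local Open Scope ring_scope.

(* Let r be the inradius and lam = 1 - eps / r.  The open ball of radius r
   about the incentre c lies in Omega (a segment from c to a point outside
   Omega would cross the boundary closer than r to c), so by convexity
   scale_about c lam Omega + B(0, (1 - lam) r) = scale_about c lam Omega + B(0, eps)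
   is contained in Omega.  If x were interior to scale_about c lam Omega,
   moving x slightly towards a boundary point y with |x - y| <= eps gives a
   point x' of scale_about c lam Omega with |y - x'| < eps, and then a whole
   neighbourhood of y lies in Omega: y would not be a boundary point. *)

Lemma connected_meets_boundary (T : topologicalType) (A C : set T) :
  connected C -> C `&` A !=set0 -> C `\` A !=set0 ->
  C `&` (closure A `\` A°) !=set0.
Proof.
move=> cC [a [Ca Aa]] [b [Cb nAb]]; apply: contrapT => noB.
have sep : separated A° (~` closure A).
  split; apply/disjoints_subset.
    by rewrite setCK; apply: closureS; exact: interior_subset.
  by rewrite closure_setC setCK; apply: interiorS; exact: subset_closure.
have cover : C `<=` A° `|` ~` closure A.
  move=> z Cz; have [|nAz] := pselect (A° z); first by left.
  by right => clz; apply: noB; exists z.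
have [sub|sub] := connected_subset sep cover cC.
- by apply: nAb; apply: interior_subset; exact: sub.
- exact: sub _ Ca (subset_closure Aa).
Qed.

Section EuclideanNorm.
Context {R : realType} {n : nat}.
Implicit Types (a v : 'rV[R]_n).

Lemma enorm_ge0 v : 0 <= enorm v.
Proof. exact: sqrtr_ge0. Qed.

Lemma enormZ (k : R) v : enorm (k *: v) = `|k| * enorm v.
Proof.
rewrite /enorm; under eq_bigr do rewrite mxE exprMn.
by rewrite -mulr_sumr sqrtrM ?sqr_ge0 // sqrtr_sqr.
Qed.

Lemma enorm_eq0 v : (enorm v == 0) = (v == 0).
Proof.
apply/eqP/eqP => [|->]; last first.
  by rewrite /enorm big1 ?sqrtr0 // => i _; rewrite mxE expr0n.
move/eqP; rewrite sqrtr_eq0 le_eqVlt ltNge sumr_ge0 ?orbF => [/eqP v0|i _]; last first.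
  exact: sqr_ge0.
apply/rowP => i; rewrite mxE; apply/eqP; rewrite -sqrf_eq0; apply/eqP.
exact: (psumr_eq0P (fun j _ => sqr_ge0 (v ord0 j)) v0).
Qed.

Lemma enorm_continuous : continuous (@enorm R n).
Proof.
move=> v; apply: continuous_comp; last exact: sqrt_continuous.
apply: (continuous_big (fun z => add_continuous z)) => i _ w.
by apply: continuousM; exact: coord_continuous.
Qed.

Lemma enorm_lt_nbhs a v (e : R) :
  enorm (v - a) < e -> \forall z \near v, enorm (z - a) < e.
Proof.
move=> va; have cont : continuous (fun z : 'rV[R]_n => enorm (z - a)).
  move=> z; apply: (continuous_comp (f := fun z : 'rV[R]_n => z - a)).
    exact: (@cvgD _ _ _ (nbhs z) _ id (fun=> - a) z (- a) cvg_id (cvg_cst _)).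
  exact: enorm_continuous.
exact: (cont v) (open_nbhs_nbhs (conj (@open_lt _ e) va)).
Qed.

Lemma line_continuous a v : continuous (fun t : R => a + t *: v).
Proof.
move=> t; exact: (@cvgD _ _ _ (nbhs t) _ (fun=> a) (fun t => t *: v) _ _
                   (cvg_cst _) (cvgZr_tmp cvg_id)).
Qed.

End EuclideanNorm.

Section ConvexBody.
Context {R : realType} {n : nat}.
Implicit Types (A : set 'rV[R]_n) (c x y : 'rV[R]_n).

Lemma dist_bd_le A x y : bd A y -> dist_bd A x <= enorm (x - y).
Proof.
move=> bdy; apply: ge_inf; last by exists y.
by exists 0 => _ [z _ <-]; exact: enorm_ge0.
Qed.

Lemma incentre_inradius A c : is_incentre A c -> inradius A = dist_bd A c.
Proof.
move=> [Ac c_max]; have dists_ne : [set dist_bd A x | x in A] !=set0.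
  by exists (dist_bd A c), c.
apply/eqP; rewrite eq_le; apply/andP; split.
  by apply: ge_sup => // _ [x Ax <-]; exact: c_max.
apply: sup_upper_bound; last by exists c.
by split => //; exists (dist_bd A c) => _ [x Ax <-]; exact: c_max.
Qed.

Lemma enorm_ball_subset A c x (r : R) : A c ->
  (forall y, bd A y -> r <= enorm (c - y)) -> enorm (x - c) < r -> A x.
Proof.
move=> Ac bd_far xc; apply: contrapT => Ax.
pose g t := c + t *: (x - c).
have seg_conn : connected (g @` `[0, 1]).
  apply: connected_continuous_connected; first exact: segment_connected.
  exact/continuous_subspaceT/line_continuous.
have [_ [[s s01 <-] bd_gs]] : g @` `[0, 1] `&` bd A !=set0.
  apply: connected_meets_boundary seg_conn _ _.
    exists c; split=> //; exists 0; first by rewrite /= in_itv/= lexx ler01.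
    by rewrite /g scale0r addr0.
  exists x; split=> //; exists 1; first by rewrite /= in_itv/= lexx ler01.
  by rewrite /g scale1r addrC subrK.
have := bd_far _ bd_gs; rewrite /g opprD addrA subrr add0r -scaleNr enormZ normrN.
move: s01; rewrite /= in_itv/= => /andP[s0 s1]; rewrite ger0_norm //.
have := enorm_ge0 (x - c); nra.
Qed.

Lemma interior_closer_point A x y (e : R) :
  A° x -> 0 < e -> enorm (x - y) <= e -> exists2 x', A x' & enorm (y - x') < e.
Proof.
move=> Ax e_gt0 xy; pose g t := x + t *: (y - x).
have Ag : \forall t \near 0, A (g t).
  by apply: (@line_continuous R n x (y - x) 0); rewrite scale0r addr0.
have : \forall t \near 0^'+, [/\ A (g t), 0 < t & t < 1].
  near=> t; split; near: t.
  - exact: cvg_within Ag.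
  - exact: nbhs_right_gt.
  - exact: nbhs_right_lt ltr01.
move=> /filter_ex [t [Agt t_gt0 t_lt1]]; exists (g t) => //.
have -> : y - g t = (t - 1) *: (x - y) by apply/rowP => i; rewrite !mxE; ring.
rewrite enormZ ler0_norm ?subr_le0 ?ltW //.
have := enorm_ge0 (x - y); nra.
Unshelve. all: end_near.
Qed.

Lemma shift_scale_about_in A c x (v : 'rV[R]_n) (r lam : R) :
  Defs.convex_set A -> (forall y, enorm (y - c) < r -> A y) -> 0 <= lam < 1 ->
  scale_about c lam A x -> enorm v < (1 - lam) * r -> A (x + v).
Proof.
move=> cvx ballA /andP[lam_ge0 lam_lt1] [w Aw <-] vr.
have sub1lam_gt0 : 0 < 1 - lam by rewrite subr_gt0.
pose y := c + (1 - lam)^-1 *: v.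
have Ay : A y.
  apply: ballA; rewrite /y addrC addKr enormZ ger0_norm ?invr_ge0 ?ltW //.
  by rewrite ltr_pdivrMl.
suff -> : c + lam *: (w - c) + v = lam *: w + (1 - lam) *: y.
  exact: cvx w y lam Aw Ay lam_ge0 (ltW lam_lt1).
rewrite /y !scalerDr scalerA divff ?gt_eqF // scale1r.
by apply/rowP => i; rewrite !mxE; ring.
Qed.

Lemma scale_about1 A c : scale_about c 1 A = A.
Proof.
apply/seteqP; split => [_ [x Ax <-]|x Ax]; first by rewrite scale1r addrC subrK.
by exists x => //; rewrite scale1r addrC subrK.
Qed.

End ConvexBody.

Theorem mainTheorem2 (R : realType) (n : nat) (Omega : set 'rV[R]_n)
  (c : 'rV[R]_n) (eps : R) :
  convex_body Omega -> is_incentre Omega c ->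
  0 <= eps -> eps <= inradius Omega ->
  inner_nbhd Omega eps `<=`
    Omega `\` interior (scale_about c (1 - eps / inradius Omega) Omega).
Proof.
move=> [cvx _ _] inc eps_ge0 eps_le x [Ox [y [bdy xy]]]; split=> // x_int.
apply: bdy.2; set r := inradius Omega in eps_le x_int.
move: eps_ge0; rewrite le_eqVlt => /predU1P[eps0|eps_gt0].
  move: x_int xy; rewrite -eps0 mul0r subr0 scale_about1 => x_int xy0.
  have : enorm (x - y) == 0 by rewrite eq_le xy0 enorm_ge0.
  by rewrite enorm_eq0 subr_eq0 => /eqP <-.
have r_gt0 : 0 < r := lt_le_trans eps_gt0 eps_le.
have ballOmega : forall q, enorm (q - c) < r -> Omega q.
  move=> q; apply: enorm_ball_subset inc.1 _ => p bdp.
  by rewrite /r (incentre_inradius inc); exact: dist_bd_le.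
have lam_bounds : 0 <= 1 - eps / r < 1.
  by rewrite subr_ge0 ler_pdivrMr // mul1r eps_le gtrBl divr_gt0.
have [x' Sx' yx'] := interior_closer_point x_int eps_gt0 xy.
apply: filterS (enorm_lt_nbhs yx') => z zx'.
rewrite -(subrKC x' z); apply: shift_scale_about_in cvx ballOmega lam_bounds Sx' _.
by rewrite subKr divfK // gt_eqF.
Qed.
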